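(* Let $m\le n$, $K\in\{0,\ldots,m-1\}$, $\gamma>0$, $\mathcal{C}\subset\mathrm{dom} f\subset\mathbb{R}^{m\times n}$, and consider $$\min_{X\in\mathbb{R}^{m\times n}}\ f(X)+\gamma\mathcal{T}_K(X)+\delta_{\mathcal C}(X),$$ where $f+\delta_{\mathcal C}$ is directionally differentiable. Let $X^*$ be a d-stationary point. Suppose: (C1) every $X\in\mathcal C$ has a singular value decomposition $X=U[\mathrm{diag}(\sigma_1(X),\ldots,\sigma_m(X)),0]V^\top$ ($U,V$ orthogonal) such that $-U[\mathrm{diag}(0,\ldots,0,\sigma_{K+1}(X),\ldots,\sigma_m(X)),0]V^\top\in\mathcal{F}(X;\mathcal C)$; (C2) there is $\Gamma$ with $(f+\delta_{\mathcal C})'(X^*;D)\le\Gamma$ for all $D\in\mathcal{F}(X^*;\mathcal C)$ with $\|D\|_*=1$. If $\gamma>\Gamma$, then $\mathcal{T}_K(X^* )=0$, i.e., $\mathrm{rank}(X^* )\le K$.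
   Context: Truncated nuclear norm: $\mathcal{T}_K(X)=\sum_{i=K+1}^{\min\{m,n\}}\sigma_i(X)$, where $\sigma_i(X)$ is the $i$-th largest singular value. $\|D\|_*$ is the nuclear norm (sum of singular values). $\delta_{\mathcal C}$ is the indicator of $\mathcal C$; $\mathrm{dom} f=\{X\mid f(X)<\infty\}$. Feasible cone $\mathcal{F}(X;\mathcal{C})=\{D\mid \exists\varsigma'>0:\ X+\varsigma D\in\mathcal{C}\ \forall\varsigma\in(0,\varsigma')\}$ for $X\in\mathcal C$. Directional derivative $h'(X;D)=\lim_{\varsigma\searrow0}(h(X+\varsigma D)-h(X))/\varsigma$, assumed to exist in $\mathbb{R}$ for feasible directions. $X^*$ is d-stationary if the objective's directional derivative at $X^*$ is $\ge0$ for all $D\in\mathcal{F}(X^*;\mathcal C)$. *)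

From HB Require Import structures.
From Stdlib Require Import ClassicalEpsilon.
From mathcomp Require Import all_boot all_order all_algebra.
From mathcomp Require Import all_classical all_reals all_analysis.
Set Implicit Arguments. Unset Strict Implicit. Unset Printing Implicit Defensive.
Import Order.TTheory GRing.Theory Num.Theory.
Import numFieldNormedType.Exports.
Local Open Scope classical_set_scope.
Local Open Scope ring_scope.

Section Defs.
Variable R : realType.

Definition orthogonal_mx (k : nat) (U : 'M[R]_k) : Prop := U^T *m U = 1%:M.

Definition rdiag (m n : nat) (s : 'I_m -> R) : 'M[R]_(m, n) :=
  \matrix_(i < m, j < n) (if (i : nat) == (j : nat) then s i else 0).

Definition is_svd (m n : nat) (X : 'M[R]_(m, n)) (U : 'M[R]_m) (V : 'M[R]_n)
    (s : 'I_m -> R) : Prop :=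
  [/\ orthogonal_mx U, orthogonal_mx V,
      (forall i, 0 <= s i),
      (forall i j : 'I_m, (i <= j)%N -> s j <= s i) &
      X = U *m rdiag n s *m V^T].

(* singular values sigma_1(X) >= ... >= sigma_m(X), 0-indexed:
   sigma X i = sigma_{i+1}(X). They are the diagonal of any SVD of X
   (SVDs exist and the diagonal is unique; chosen by Hilbert's epsilon). *)
Definition sing_vals (m n : nat) (X : 'M[R]_(m, n)) : 'I_m -> R :=
  epsilon (inhabits (fun _ : 'I_m => 0))
    (fun s => exists U V, is_svd X U V s).

Definition nuc_norm (m n : nat) (X : 'M[R]_(m, n)) : R :=
  \sum_(i < m) sing_vals X i.

Definition trunc_nuc (K m n : nat) (X : 'M[R]_(m, n)) : R :=
  \sum_(i < m | (K <= i)%N) sing_vals X i.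

Definition ind_set (T : Type) (C : set T) (X : T) : \bar R :=
  if `[< C X >] then 0%E else +oo%E.

Definition edom (T : Type) (f : T -> \bar R) : set T := [set X | (f X < +oo)%E].

Definition feas_cone (m n : nat) (C : set 'M[R]_(m, n)) (X : 'M[R]_(m, n)) :
    set 'M[R]_(m, n) :=
  [set D | exists2 e : R, 0 < e & forall t : R, 0 < t < e -> C (X + t *: D)].

Definition is_dirder (m n : nat) (h : 'M[R]_(m, n) -> \bar R)
    (X D : 'M[R]_(m, n)) (l : R) : Prop :=
  ((fun t : R => ((h (X + t *: D)%R - h X) * (t^-1)%:E)%E) @ 0^'+ --> l%:E)%E.

End Defs.
Arguments ind_set R {T} C X.

From HB Require Import structures.
From Stdlib Require Import ClassicalEpsilon.
From mathcomp Require Import all_boot all_order all_algebra.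
From mathcomp Require Import all_classical all_reals all_analysis.
From mathcomp Require Import perm ring.
Import Order.TTheory GRing.Theory Num.Theory.
Import numFieldNormedType.Exports.
Local Open Scope classical_set_scope.
Local Open Scope ring_scope.

(* If c := T_K(Xs) > 0, move from Xs = U [diag(sigma), 0] V^T in the direction
   D = -(1/c) U [diag(0,...,0,sigma_(K+1),...,sigma_m), 0] V^T, which is feasible
   by (C1) and has nuclear norm 1.  For 0 < t < c the point Xs + t D has singular
   values sigma_1, ..., sigma_K, (1 - t/c) sigma_(K+1), ..., (1 - t/c) sigma_m, so
   T_K(Xs + t D) = c - t and the directional derivative of the objective along D
   is (f + delta_C)'(Xs; D) - gamma <= Gamma - gamma < 0, contradicting
   d-stationarity.  Singular values are identified through the characteristic
   polynomial of X X^T: for X = U [diag(s), 0] V^T with U, V orthogonal they are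
   the |s_i| in nonincreasing order. *)

Lemma char_poly_similar (R : comNzRingType) k (P Q A : 'M[R]_k) :
  Q *m P = 1%:M -> char_poly (P *m A *m Q) = char_poly A.
Proof.
move=> QP; have PQ := mulmx1C QP.
rewrite /char_poly /char_poly_mx !map_mxM.
have XE : ('X%:M : 'M[{poly R}]_k) = map_mx polyC P *m 'X%:M *m map_mx polyC Q.
  by rewrite scalar_mxC -mulmxA -map_mxM PQ map_mx1 mulmx1.
rewrite {1}XE -mulmxBl -mulmxBr !det_mulmx mulrC mulrA -det_mulmx.
by rewrite -map_mxM QP map_mx1 det1 mul1r.
Qed.

Lemma sorting_perm {R : realDomainType} {m} (f : 'I_m -> R) :
  exists p : 'S_m, forall i j : 'I_m, (i <= j)%N -> f (p j) <= f (p i).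
Proof.
pose ge_f i j := f j <= f i.
pose r := sort ge_f (enum 'I_m).
have r_size : size r = m by rewrite size_sort size_enum_ord.
have r_uniq : uniq r by rewrite sort_uniq enum_uniq.
have r_sorted : sorted ge_f r by apply: sort_sorted => i j; exact: le_total.
have q_inj : injective (fun k : 'I_m => nth k r k).
  move=> k l /= klE; apply: val_inj; apply/eqP.
  have [k_lt l_lt] : (k < size r)%N /\ (l < size r)%N by rewrite r_size.
  by rewrite -(nth_uniq k k_lt l_lt r_uniq) klE (set_nth_default k l l_lt).
exists (perm q_inj) => i j ij; rewrite !permE (set_nth_default i j) ?r_size //.
apply: (sorted_leq_nth _ _ i r_sorted); rewrite ?inE ?r_size //.
- by move=> a b c ba cb; exact: le_trans cb ba.
- by move=> a; exact: lexx.
Qed.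

Lemma sorted_nonincreasing_enum {R : realDomainType} {m} {s : 'I_m -> R} :
  (forall i j : 'I_m, (i <= j)%N -> s j <= s i) ->
  sorted (fun a b => b <= a) [seq s i | i <- enum 'I_m].
Proof.
move=> s_sorted; rewrite sorted_map.
have : sorted (relpre val leq) (enum 'I_m).
  by rewrite -sorted_map val_enum_ord iota_sorted.
by apply: sub_sorted => i j /= ij; apply: s_sorted.
Qed.

Lemma widen_inj_extend {m n} (mn : (m <= n)%N) {p : 'I_m -> 'I_m} : injective p ->
  exists2 q : 'I_n -> 'I_n, injective q & forall k, q (widen_ord mn k) = widen_ord mn (p k).
Proof.
move=> p_inj.
exists (fun j => if insub (val j) is Some k then widen_ord mn (p k) else j).
  move=> j l; case: insubP => [k _ jk|jm]; case: insubP => [k' _ lk'|lm] //=.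
  - by move=> /(congr1 val) /= /val_inj /p_inj kk'; apply: val_inj; rewrite -jk -lk' kk'.
  - by move=> jE; move: lm; rewrite -jE /= ltn_ord.
  - by move=> jE; move: jm; rewrite jE /= ltn_ord.
move=> k; case: insubP => [k' _ kE|]; last by rewrite /= ltn_ord.
by rewrite (val_inj kE).
Qed.

Lemma orthogonal_mxE (R : realType) k (U : 'M[R]_k) :
  orthogonal_mx U <-> forall i j, \sum_l U l i * U l j = (i == j)%:R.
Proof.
rewrite /orthogonal_mx; split=> [UTU i j | UE].
  by move/matrixP/(_ i j): UTU; rewrite !mxE => <-; apply: eq_bigr => l _; rewrite mxE.
by apply/matrixP => i j; rewrite !mxE -UE; apply: eq_bigr => l _; rewrite mxE.
Qed.

Lemma orthogonal_mx_reindex (R : realType) k (U : 'M[R]_k) (e : 'I_k -> R)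
    (q : 'I_k -> 'I_k) :
  orthogonal_mx U -> injective q -> (forall j, e j * e j = 1) ->
  orthogonal_mx (\matrix_(i, j) (e j * U i (q j))).
Proof.
move=> /orthogonal_mxE U_orth q_inj e2; apply/orthogonal_mxE => i j.
under eq_bigr do rewrite !mxE mulrACA.
rewrite -mulr_sumr U_orth (inj_eq q_inj).
by case: (eqVneq i j) => [->|_]; rewrite ?e2 ?mul1r ?mulr0.
Qed.

Section RectangularDiagonal.
Context {R : realType} {m n : nat}.
Implicit Types (U : 'M[R]_m) (V : 'M[R]_n) (s : 'I_m -> R).

Lemma mxrank_mul_rdiag p q (A : 'M[R]_(p, m)) (B : 'M[R]_(n, q)) s K :
  (forall i : 'I_m, (K <= i)%N -> s i = 0) -> (\rank (A *m rdiag n s *m B) <= K)%N.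
Proof.
move=> s_tail0.
pose L := \matrix_(i < m, k < K) (if (i : nat) == k then s i else 0).
pose P := \matrix_(k < K, j < n) (if (k : nat) == j then 1 else 0 : R).
have -> : rdiag n s = L *m P.
  apply/matrixP => i j; rewrite !mxE.
  have [iK|Ki] := ltnP i K.
    rewrite (bigD1 (Ordinal iK)) //= big1 ?addr0; last first.
      move=> k /negbTE ki; rewrite !mxE.
      by move: ki; rewrite -val_eqE /= eq_sym => ->; rewrite mul0r.
    by rewrite !mxE eqxx /=; case: eqP => _; rewrite ?mulr1 ?mulr0.
  rewrite s_tail0 // big1 ?if_same // => k _; rewrite !mxE.
  by rewrite ifN ?mul0r // neq_ltn (leq_trans (ltn_ord k) Ki) orbT.
apply: leq_trans (mxrankM_maxl _ _) _.
apply: leq_trans (mxrankM_maxr _ _) _.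
exact: leq_trans (mxrankM_maxl _ _) (rank_leq_col _).
Qed.

Lemma scale_svd U V s a :
  a *: (U *m rdiag n s *m V^T) = U *m rdiag n (fun i => a * s i) *m V^T.
Proof.
rewrite scalemxAl scalemxAr; congr (_ *m _ *m _).
by apply/matrixP => i j; rewrite !mxE; case: ifP; rewrite ?mulr0.
Qed.

Lemma sub_scale_svd U V s s' a :
  U *m rdiag n s *m V^T - a *: (U *m rdiag n s' *m V^T) =
  U *m rdiag n (fun i => s i - a * s' i) *m V^T.
Proof.
rewrite scale_svd -mulmxBl -mulmxBr; congr (_ *m _ *m _).
by apply/matrixP => i j; rewrite !mxE; case: ifP; rewrite ?subr0.
Qed.

Hypothesis mn : (m <= n)%N.

Lemma rdiag_entry s i j : rdiag n s i j = if j == widen_ord mn i then s i else 0.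
Proof. by rewrite /rdiag mxE -val_eqE /= eq_sym. Qed.

Lemma mul_rdiag_entry U V s i j :
  (U *m rdiag n s *m V^T) i j = \sum_(k < m) U i k * s k * V j (widen_ord mn k).
Proof.
rewrite mxE (eq_bigr (fun l => \sum_(k < m)
    (U i k * (if l == widen_ord mn k then s k else 0)) * V j l)); last first.
  move=> l _; rewrite !mxE mulr_suml.
  by apply: eq_bigr => k _; rewrite rdiag_entry eq_sym.
rewrite exchange_big /=; apply: eq_bigr => k _.
rewrite (bigD1 (widen_ord mn k)) //= eqxx big1 ?addr0 // => l /negbTE ->.
by rewrite mulr0 mul0r.
Qed.

Lemma rdiag_mul_tr s : rdiag n s *m (rdiag n s)^T = diag_mx (\row_i (s i ^+ 2)).
Proof.
apply/matrixP => i k; rewrite !mxE (bigD1 (widen_ord mn i)) //= big1 ?addr0.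
  rewrite !mxE /= eqxx.
  case: (eqVneq i k) => [->|ik]; first by rewrite eqxx expr2.
  by rewrite ifN ?mulr0 ?mulr0n // val_eqE eq_sym.
move=> l /negbTE il; rewrite !mxE.
have -> : ((i : nat) == l) = false by rewrite eq_sym -il -val_eqE.
by rewrite mul0r.
Qed.

End RectangularDiagonal.

Section SingularValues.
Context {R : realType} {m n : nat}.
Hypothesis mn : (m <= n)%N.
Implicit Types (U : 'M[R]_m) (V : 'M[R]_n) (s : 'I_m -> R).

Lemma char_poly_svd {U V} s : orthogonal_mx U -> orthogonal_mx V ->
  let X := U *m rdiag n s *m V^T in
  char_poly (X *m X^T) = \prod_(x <- [seq s i ^+ 2 | i <- enum 'I_m]) ('X - x%:P).
Proof.
move=> U_orth V_orth X.
have -> : X *m X^T = U *m diag_mx (\row_i (s i ^+ 2)) *m U^T.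
  rewrite /X !trmx_mul trmxK -(rdiag_mul_tr mn) !mulmxA; congr (_ *m _).
  by rewrite -!mulmxA; congr (_ *m _); rewrite [V^T *m _]mulmxA V_orth mul1mx.
rewrite char_poly_similar ?U_orth // char_poly_trig ?diag_mx_is_trig //.
by rewrite big_map big_enum /=; apply: eq_bigr => i _; rewrite !mxE eqxx mulr1n.
Qed.

Lemma svd_perm_abs {U V U' V'} s s' :
  orthogonal_mx U -> orthogonal_mx V -> orthogonal_mx U' -> orthogonal_mx V' ->
  U *m rdiag n s *m V^T = U' *m rdiag n s' *m V'^T -> (forall i, 0 <= s' i) ->
  perm_eq [seq `|s i| | i <- enum 'I_m] [seq s' i | i <- enum 'I_m].
Proof.
move=> U_orth V_orth U'_orth V'_orth XE s'_ge0.
have := char_poly_svd s U_orth V_orth.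
rewrite /= XE (char_poly_svd s' U'_orth V'_orth) => /prod_XsubC_eq.
move=> /(perm_map (fun x : R => Num.sqrt x)); rewrite -!map_comp perm_sym.
by congr perm_eq; apply: eq_map => i /=; rewrite sqrtr_sqr // ger0_norm.
Qed.

Lemma svd_exists {U V} s : orthogonal_mx U -> orthogonal_mx V ->
  exists U' V' s', is_svd (U *m rdiag n s *m V^T) U' V' s'.
Proof.
move=> U_orth V_orth.
have [p p_sorted] := sorting_perm (fun i => `|s i|).
have [q q_inj qE] := widen_inj_extend mn (@perm_inj _ p).
pose sg k : R := if s (p k) < 0 then -1 else 1.
have sg2 k : sg k * sg k = 1 by rewrite /sg; case: ifP; rewrite ?mulrNN mulr1.
have sg_abs k : sg k * `|s (p k)| = s (p k).
  rewrite /sg; case: ifP => [s_lt0|s_ge0]; first by rewrite ltr0_norm // mulN1r opprK.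
  by rewrite mul1r ger0_norm // leNgt s_ge0.
exists (\matrix_(i, k) (sg k * U i (p k))), (\matrix_(i, j) (1 * V i (q j))).
exists (fun k => `|s (p k)|); split => //.
- exact: orthogonal_mx_reindex (@perm_inj _ p) sg2.
- by apply: orthogonal_mx_reindex => // j; rewrite mulr1.
- apply/matrixP => i j; rewrite !(mul_rdiag_entry mn) (reindex_inj (@perm_inj _ p)) /=.
  by apply: eq_bigr => k _; rewrite !mxE qE -{1}(sg_abs k) mul1r mulrCA !mulrA.
Qed.

Lemma sing_vals_is_svd {U V} s : orthogonal_mx U -> orthogonal_mx V ->
  let X := U *m rdiag n s *m V^T in exists U' V', is_svd X U' V' (sing_vals X).
Proof.
move=> U_orth V_orth X; rewrite /sing_vals.
apply: (epsilon_spec _ (fun s' => exists U' V', is_svd X U' V' s')).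
by have [U' [V' [s' ?]]] := svd_exists s U_orth V_orth; exists s', U', V'.
Qed.

Lemma sing_vals_perm_abs {U V} s : orthogonal_mx U -> orthogonal_mx V ->
  perm_eq [seq `|s i| | i <- enum 'I_m]
          [seq sing_vals (U *m rdiag n s *m V^T) i | i <- enum 'I_m].
Proof.
move=> U_orth V_orth.
have [U' [V' [U'_orth V'_orth sv_ge0 _ XE]]] := sing_vals_is_svd s U_orth V_orth.
exact: svd_perm_abs _ _ U_orth V_orth U'_orth V'_orth XE sv_ge0.
Qed.

Lemma sing_vals_svd {U V} s : orthogonal_mx U -> orthogonal_mx V ->
  (forall i, 0 <= s i) -> (forall i j : 'I_m, (i <= j)%N -> s j <= s i) ->
  sing_vals (U *m rdiag n s *m V^T) = s.
Proof.
move=> U_orth V_orth s_ge0 s_sorted.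
have [_ [_ [_ _ _ sv_sorted _]]] := sing_vals_is_svd s U_orth V_orth.
have := sing_vals_perm_abs s U_orth V_orth.
rewrite (eq_map (fun i => ger0_norm (s_ge0 i))).
have ge_trans : transitive (fun a b : R => b <= a).
  by move=> a b c ba cb; exact: le_trans cb ba.
have ge_anti : antisymmetric (fun a b : R => b <= a).
  by move=> a b /andP[ba ab]; apply/eqP; rewrite eq_le ab ba.
move=> /(sorted_eq ge_trans ge_anti (sorted_nonincreasing_enum s_sorted)
          (sorted_nonincreasing_enum sv_sorted)) /eq_in_map sE.
by apply/funext => i; apply/esym/sE; rewrite mem_enum.
Qed.

Lemma nuc_norm_svd {U V} s : orthogonal_mx U -> orthogonal_mx V ->
  nuc_norm (U *m rdiag n s *m V^T) = \sum_(i < m) `|s i|.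
Proof.
move=> U_orth V_orth; rewrite /nuc_norm -big_enum -(big_map _ xpredT id).
by rewrite -(perm_big _ (sing_vals_perm_abs s U_orth V_orth)) big_map big_enum.
Qed.

Lemma trunc_nuc_sub_tail {U V} s K (t : R) :
  orthogonal_mx U -> orthogonal_mx V ->
  (forall i, 0 <= s i) -> (forall i j : 'I_m, (i <= j)%N -> s j <= s i) ->
  0 <= t <= 1 ->
  trunc_nuc K (U *m rdiag n s *m V^T
                 - t *: (U *m rdiag n (fun i => if (K <= i)%N then s i else 0) *m V^T))
  = (1 - t) * trunc_nuc K (U *m rdiag n s *m V^T).
Proof.
move=> U_orth V_orth s_ge0 s_sorted /andP[t_ge0 t_le1].
have t'_ge0 : 0 <= 1 - t by rewrite subr_ge0.
rewrite sub_scale_svd.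
set v := fun i => _.
have vE : v = fun i => if (K <= i)%N then (1 - t) * s i else s i.
  by apply/funext => i; rewrite /v; case: ifP; rewrite ?mulr0 ?subr0 // mulrBl mul1r.
have v_ge0 i : 0 <= v i by rewrite vE; case: ifP; rewrite ?mulr_ge0.
have v_sorted (i j : 'I_m) : (i <= j)%N -> v j <= v i.
  move=> ij; rewrite vE; case: ifP => Kj; case: ifP => Ki.
  - by rewrite ler_wpM2l ?s_sorted.
  - by apply: le_trans (s_sorted _ _ ij); rewrite ler_piMl // gerBl.
  - by rewrite (leq_trans Ki ij) in Kj.
  - exact: s_sorted.
rewrite /trunc_nuc !sing_vals_svd // mulr_sumr.
by apply: eq_bigr => i Ki; rewrite vE /= Ki.
Qed.

End SingularValues.

Lemma feas_coneZ {R : realType} {m n} (C : set 'M[R]_(m, n)) X D a :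
  0 < a -> feas_cone C X D -> feas_cone C X (a *: D).
Proof.
move=> a_gt0 [e e_gt0 XDC]; exists (e / a); first by rewrite divr_gt0.
move=> t /andP[t_gt0 t_lt]; rewrite scalerA; apply: XDC.
by rewrite mulr_gt0 //= -ltr_pdivlMr.
Qed.

Lemma ereal_quotient_shift {R : realType} (y x : \bar R) (b a t : R) : 0 < t ->
  (((y + (b + a * t)%:E) - (x + b%:E)) * t^-1%:E = (y - x) * t^-1%:E + a%:E)%E.
Proof.
move=> t_gt0; have tV_gt0 : 0 < t^-1 by rewrite invr_gt0.
case: x => [x| |]; case: y => [y| |] //=.
all: rewrite ?addNye ?addeNy ?mulNyr ?addye ?addey ?gt0_mulye ?gt0_mulNye ?lte_fin //.
- rewrite -!EFinD -!EFinM; congr EFin.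
  rewrite (_ : y + _ - _ = y - x + a * t); last by ring.
  by rewrite mulrDl mulfK ?gt_eqF.
all: by rewrite gtr0_sg // mul1e addNye.
Qed.

Section DirectionalDerivative.
Context {R : realType} {m n : nat}.
Implicit Types (h : 'M[R]_(m, n) -> \bar R) (X D : 'M[R]_(m, n)).

Lemma is_dirder_unique {h X D l l'} : is_dirder h X D l -> is_dirder h X D l' -> l = l'.
Proof.
move=> hl hl'; have : l%:E = l'%:E by apply: cvg_unique hl hl'; exact: ereal_hausdorff.
by case.
Qed.

Lemma is_dirder_addE (g : 'M[R]_(m, n) -> R) (a : R) {h X D l} {d : R} : 0 < d ->
  (forall t, 0 < t < d -> g (X + t *: D) = g X + a * t) ->
  is_dirder h X D l -> is_dirder (fun Y => h Y + (g Y)%:E)%E X D (l + a).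
Proof.
move=> d_gt0 gE hl; rewrite /is_dirder EFinD.
apply: cvg_trans (cvgeD _ hl (cvg_cst a%:E)); last by [].
apply: near_eq_cvg; near=> t.
have t_gt0 : 0 < t by near: t; exact: nbhs_right_gt.
rewrite gE ?ereal_quotient_shift // t_gt0 /=.
near: t; exact: nbhs_right_lt.
Unshelve. all: by end_near.
Qed.

End DirectionalDerivative.

Theorem mainTheorem14 (R : realType) (m n K : nat) (gamma Gamma : R)
    (f : 'M[R]_(m, n) -> \bar R) (C : set 'M[R]_(m, n)) (Xs : 'M[R]_(m, n)) :
  (m <= n)%N -> (K < m)%N -> 0 < gamma ->
  C `<=` edom f ->
  (* f + delta_C is directionally differentiable (finite derivative along
     feasible directions at points of C) *)
  (forall X, C X -> forall D, feas_cone C X D ->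
     exists l : R, is_dirder (fun Y => (f Y + ind_set R C Y)%E) X D l) ->
  (* Xs is a d-stationary point of f + gamma T_K + delta_C *)
  C Xs ->
  (forall D, feas_cone C Xs D ->
     exists2 l : R,
       is_dirder (fun Y => (f Y + (gamma * trunc_nuc K Y)%:E + ind_set R C Y)%E) Xs D l
       & 0 <= l) ->
  (* (C1) *)
  (forall X, C X -> exists U V,
     [/\ orthogonal_mx U, orthogonal_mx V,
         X = U *m rdiag n (sing_vals X) *m V^T &
         feas_cone C X
           (- (U *m rdiag n (fun i => if (K <= i)%N then sing_vals X i else 0)
                 *m V^T))]) ->
  (* (C2) *)
  (forall D, feas_cone C Xs D -> nuc_norm D = 1 ->
     forall l : R, is_dirder (fun Y => (f Y + ind_set R C Y)%E) Xs D l -> l <= Gamma) ->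
  gamma > Gamma ->
  trunc_nuc K Xs = 0 /\ (\rank Xs <= K)%N.
Proof.
move=> mn _ _ _ fC_dirder Xs_in_C Xs_stat C1 C2 Gamma_lt_gamma.
have [U [V [U_orth V_orth XsE tail_feas]]] := C1 Xs Xs_in_C.
have := sing_vals_is_svd mn (sing_vals Xs) U_orth V_orth.
rewrite -XsE => -[_ [_ [_ _ sig_ge0 sig_sorted _]]].
set sig := sing_vals Xs in XsE tail_feas sig_ge0 sig_sorted.
set c := trunc_nuc K Xs.
have cE : c = \sum_(i < m | (K <= i)%N) sig i by [].
have [c0|c_neq0] := eqVneq c 0.
  split=> //; rewrite XsE; apply: mxrank_mul_rdiag => i Ki.
  by move: c0; rewrite cE => /psumr_eq0P; apply.
exfalso.
have c_gt0 : 0 < c by rewrite lt_neqAle eq_sym c_neq0 cE sumr_ge0.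
set tail := U *m rdiag n _ *m V^T in tail_feas.
pose D := c^-1 *: - tail.
have D_feas : feas_cone C Xs D by apply: feas_coneZ; rewrite ?invr_gt0.
have D_nuc : nuc_norm D = 1.
  rewrite /D scalerN -scaleNr scale_svd (nuc_norm_svd mn) //.
  have -> : 1 = c^-1 * \sum_(i < m) (if (K <= i)%N then sig i else 0).
    by rewrite -big_mkcond -cE mulVf.
  rewrite mulr_sumr; apply: eq_bigr => i _.
  rewrite normrM normrN [`|c^-1|]gtr0_norm ?invr_gt0 //.
  by case: ifP => _; rewrite ?normr0 // ger0_norm ?sig_ge0.
have [l l_dd] := fC_dirder Xs Xs_in_C D D_feas.
have [l' l'_dd l'_ge0] := Xs_stat D D_feas.
have obj_dd : is_dirder
    (fun Y => f Y + (gamma * trunc_nuc K Y)%:E + ind_set R C Y)%E Xs D (l - gamma).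
  rewrite (_ : (fun Y => _) =
      fun Y => f Y + ind_set R C Y + (gamma * trunc_nuc K Y)%:E)%E; last first.
    by apply/funext => Y; rewrite addeAC.
  apply: (is_dirder_addE (fun Y => gamma * trunc_nuc K Y) (- gamma) c_gt0 _ l_dd).
  move=> t /andP[t_gt0 t_lt_c].
  have -> : Xs + t *: D = Xs - (t / c) *: tail by rewrite /D scalerA scalerN.
  rewrite {1}XsE (trunc_nuc_sub_tail mn) -?XsE -/c //; last first.
    apply/andP; split; first by rewrite divr_ge0 // ltW.
    by rewrite ler_pdivrMr // mul1r ltW.
  by rewrite mulrBl mul1r divfK ?gt_eqF //; ring.
have := C2 D D_feas D_nuc l l_dd.
move: l'_ge0; rewrite (is_dirder_unique l'_dd obj_dd) subr_ge0 => gamma_le_l l_le_Gamma.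
by have := lt_le_trans Gamma_lt_gamma (le_trans gamma_le_l l_le_Gamma); rewrite ltxx.
Qed.
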